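(* Let $\mathcal S$ and $\mathcal A$ be finite sets, $P(\cdot\mid s,a)$ a transition kernel on $\mathcal S$, $r:\mathcal S\times\mathcal A\times\mathcal S\to\mathbb R$ a reward function, $\gamma\in[0,1)$, and $\beta>0$. Let $Q^*$ be the unique fixed point of the Bellman operator $(TQ)(s,a)=R(s,a)+\gamma\sum_{s'}P(s'\mid s,a)\max_{a'\in\mathcal A}Q(s',a')$, where $R(s,a)=\sum_{s'}P(s'\mid s,a)r(s,a,s')$. For $Q_1,Q_2:\mathcal S\times\mathcal A\to\mathbb R$ define $$L_1=\mathbb E_{(s,a)\sim U(\mathcal S\times\mathcal A),\,s'\sim P(\cdot\mid s,a)}\Big[\big(r(s,a,s')+\gamma\max_{a'}Q_2(s',a')-Q_1(s,a)\big)^2+\tfrac{\beta}{2}\big(Q_2(s,a)-Q_1(s,a)\big)^2\Big],$$ $$L_2=\mathbb E_{(s,a)\sim U(\mathcal S\times\mathcal A),\,s'\sim P(\cdot\mid s,a)}\Big[\big(r(s,a,s')+\gamma\max_{a'}Q_1(s',a')-Q_2(s,a)\big)^2+\tfrac{\beta}{2}\big(Q_1(s,a)-Q_2(s,a)\big)^2\Big],$$ where $U(\mathcal S\times\mathcal A)$ is the uniform distribution. If $\varepsilon>0$ and $L_1\le\varepsilon$, $L_2\le\varepsilon$, then for $i\in\{1,2\}$ $$\|Q_i-Q^*\|_\infty\le\frac{\sqrt{\varepsilon|\mathcal S||\mathcal A|}}{1-\gamma}+\frac{\gamma}{1-\gamma}\sqrt{\frac{2\varepsilon|\mathcal S||\mathcal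 A|}{\beta}}.$$
   Context: $Q_1,Q_2$ play the roles of the online and target Q-functions of the ''symmetric gradient target tracking'' method (SGT2-DQN); they are arbitrary real-valued functions on $\mathcal S\times\mathcal A$. $\|\cdot\|_\infty$ is the maximum over $\mathcal S\times\mathcal A$. *)

From mathcomp Require Import all_boot all_order all_algebra.
From mathcomp Require Import all_classical all_reals.
Set Implicit Arguments. Unset Strict Implicit. Unset Printing Implicit Defensive.
Import Order.TTheory GRing.Theory Num.Theory.
Local Open Scope ring_scope.

Section Defs.
Variables (R : realType) (S A : finType).

(* max_{a in A} f a, for A nonempty (a0 is a witness; the value does not depend on it) *)
Definition amax (a0 : A) (f : A -> R) : R := \big[Num.max/f a0]_(a : A) f a.

Definition supnorm (Q : S -> A -> R) : R :=
  \big[Num.max/0]_(p : S * A) `|Q p.1 p.2|.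

Definition is_kernel (P : S -> A -> S -> R) : Prop :=
  (forall s a s', 0 <= P s a s') /\ (forall s a, \sum_(s' : S) P s a s' = 1).

Definition Rexp (P : S -> A -> S -> R) (r : S -> A -> S -> R) (s : S) (a : A) : R :=
  \sum_(s' : S) P s a s' * r s a s'.

Definition bellman (a0 : A) (P : S -> A -> S -> R) (r : S -> A -> S -> R)
  (gamma : R) (Q : S -> A -> R) : S -> A -> R :=
  fun s a => Rexp P r s a + gamma * \sum_(s' : S) P s a s' * amax a0 (Q s').

Definition sgt2_loss (a0 : A) (P : S -> A -> S -> R) (r : S -> A -> S -> R)
  (gamma beta : R) (Qo Qt : S -> A -> R) : R :=
  (#|{: S * A}|%:R)^-1 *
  \sum_(p : S * A) \sum_(s' : S) P p.1 p.2 s' *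
     ((r p.1 p.2 s' + gamma * amax a0 (Qt s') - Qo p.1 p.2) ^+ 2
      + beta / 2 * (Qt p.1 p.2 - Qo p.1 p.2) ^+ 2).
End Defs.

From mathcomp Require Import all_boot all_order all_algebra.
From mathcomp Require Import all_classical all_reals.
From mathcomp Require Import lra ring.
Set Implicit Arguments. Unset Strict Implicit. Unset Printing Implicit Defensive.
Import Order.TTheory GRing.Theory Num.Theory.
Local Open Scope ring_scope.

(* Averaged over [S x A], the loss [L1 <= eps] bounds every single pair:
   by Jensen the Bellman residual [(T Q2 - Q1)(s,a)] and the gap
   [(Q2 - Q1)(s,a)] satisfy [res^2 + beta/2 gap^2 <= |S||A| eps].
   Hence [|T Q1 - Q1| <= |T Q2 - Q1| + gamma |Q2 - Q1| <= e + gamma d], and a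
   gamma-contraction with fixed point [Q*] gives [|Q1 - Q*| <= (e + gamma d)/(1 - gamma)]. *)

Lemma sqr_mean_le (R : realFieldType) (I : finType) (p x : I -> R) :
  (forall i, 0 <= p i) -> \sum_i p i = 1 ->
  (\sum_i p i * x i) ^+ 2 <= \sum_i p i * x i ^+ 2.
Proof.
move=> p_ge0 p_sum1; set m := \sum_i p i * x i.
have var_ge0 : 0 <= \sum_i p i * (x i - m) ^+ 2.
  by apply: sumr_ge0 => i _; rewrite mulr_ge0 ?sqr_ge0.
have var_eq : \sum_i p i * (x i - m) ^+ 2 = \sum_i p i * x i ^+ 2 - m ^+ 2.
  rewrite (eq_bigr (fun i => p i * x i ^+ 2 - (2 * m) * (p i * x i) + m ^+ 2 * p i));
    last by move=> i _; ring.
  rewrite big_split sumrB /= -!mulr_sumr p_sum1 /m; ring.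
by move: var_ge0; rewrite var_eq subr_ge0.
Qed.

Lemma le_card_mul_mean (R : realFieldType) (I : finType) (F : I -> R) eps i :
  (forall j, 0 <= F j) -> (#|I|%:R)^-1 * \sum_j F j <= eps -> F i <= #|I|%:R * eps.
Proof.
move=> F_ge0 mean_le.
have card_gt0 : 0 < #|I|%:R :> R by rewrite ltr0n; apply/card_gt0P; exists i.
rewrite -ler_pdivrMl // (le_trans _ mean_le) // ler_pM2l ?invr_gt0 //.
by rewrite [leRHS](bigD1 i) //= lerDl sumr_ge0.
Qed.

Lemma norm_le_sqrt_of_sqr_add_le (R : rcfType) (beta c u v : R) :
  0 < beta -> u ^+ 2 + beta / 2 * v ^+ 2 <= c ->
  `|u| <= Num.sqrt c /\ `|v| <= Num.sqrt (2 * c / beta).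
Proof.
move=> beta_gt0 le_c.
have u2_ge0 := sqr_ge0 u; have v2_ge0 := sqr_ge0 v.
have v_term_ge0 : 0 <= beta / 2 * v ^+ 2 by rewrite mulr_ge0 ?sqr_ge0 ?divr_ge0 ?ltW.
have u_le : u ^+ 2 <= c by lra.
have v_le : v ^+ 2 <= 2 * c / beta by rewrite ler_pdivlMr //; lra.
by split; rewrite -sqrtr_sqr ler_sqrt //; [lra | exact: le_trans v2_ge0 v_le].
Qed.

Section Bellman.
Variables (R : realType) (S A : finType) (a0 : A).

Lemma le_amax (f : A -> R) a : f a <= amax a0 f.
Proof. by rewrite /amax (bigD1 a) //= le_max lexx. Qed.

Lemma amax_le (f : A -> R) (c : R) : (forall a, f a <= c) -> amax a0 f <= c.
Proof.
move=> f_le; apply: (big_ind (fun x => x <= c)) => // x y.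
by rewrite ge_max => -> ->.
Qed.

Lemma amax_lipschitz (f g : A -> R) d : (forall a, `|f a - g a| <= d) ->
  `|amax a0 f - amax a0 g| <= d.
Proof.
move=> fg_le.
have amax_f_le : amax a0 f <= amax a0 g + d.
  by apply: amax_le => a; have := fg_le a; have := le_amax g a; rewrite ler_norml; lra.
have amax_g_le : amax a0 g <= amax a0 f + d.
  by apply: amax_le => a; have := fg_le a; have := le_amax f a; rewrite ler_norml; lra.
by rewrite ler_norml; apply/andP; split; lra.
Qed.

Lemma le_supnorm (Q : S -> A -> R) s a : `|Q s a| <= supnorm Q.
Proof. by rewrite /supnorm (bigD1 (s, a)) //= le_max lexx. Qed.

Lemma supnorm_ge0 (Q : S -> A -> R) : 0 <= supnorm Q.
Proof. by apply: (big_ind (fun x => 0 <= x)) => // x y x_ge0 _; rewrite le_max x_ge0. Qed.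

Lemma supnorm_le (Q : S -> A -> R) (c : R) : 0 <= c -> (forall s a, `|Q s a| <= c) ->
  supnorm Q <= c.
Proof.
move=> c_ge0 Q_le; apply: (big_ind (fun x => x <= c)) => // x y.
by rewrite ge_max => -> ->.
Qed.

Variables (P : S -> A -> S -> R) (r : S -> A -> S -> R) (gamma : R).
Hypotheses (P_kernel : is_kernel P) (gamma_ge0 : 0 <= gamma).

Local Notation T := (bellman a0 P r gamma).

Lemma bellman_lipschitz (Q Q' : S -> A -> R) c :
  (forall s a, `|Q s a - Q' s a| <= c) ->
  forall s a, `|T Q s a - T Q' s a| <= gamma * c.
Proof.
case: P_kernel => P_ge0 P_sum1 QQ'_le s a.
rewrite /bellman opprD addrACA subrr add0r -mulrBr -sumrB.
rewrite normrM ger0_norm // ler_wpM2l //.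
apply: le_trans (ler_norm_sum _ _ _) _.
rewrite -[c]mul1r -(P_sum1 s a) mulr_suml; apply: ler_sum => s' _.
rewrite -mulrBr normrM ger0_norm // ler_wpM2l //.
exact: amax_lipschitz.
Qed.

Lemma supnorm_sub_fixpoint_le (Qstar Q : S -> A -> R) e :
  gamma < 1 -> 0 <= e -> (forall s a, Qstar s a = T Qstar s a) ->
  (forall s a, `|T Q s a - Q s a| <= e) ->
  supnorm (fun s a => Q s a - Qstar s a) <= e / (1 - gamma).
Proof.
move=> gamma_lt1 e_ge0 Qstar_fix res_le.
set D := supnorm _.
have contr : forall s a, `|T Q s a - T Qstar s a| <= gamma * D.
  by apply: bellman_lipschitz => s a; exact: (le_supnorm (fun s a => Q s a - Qstar s a)).
have D_le : D <= e + gamma * D.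
  apply: supnorm_le => [|s a]; first by rewrite addr_ge0 ?mulr_ge0 ?supnorm_ge0.
  rewrite Qstar_fix; have := res_le s a; have := contr s a.
  rewrite !ler_norml => /andP[? ?] /andP[? ?]; apply/andP; split; lra.
by rewrite ler_pdivlMr ?subr_gt0 //; lra.
Qed.

Lemma sgt2_loss_pointwise (beta eps : R) (Qo Qt : S -> A -> R) s a :
  0 <= beta -> sgt2_loss a0 P r gamma beta Qo Qt <= eps ->
  (T Qt s a - Qo s a) ^+ 2 + beta / 2 * (Qt s a - Qo s a) ^+ 2
    <= #|S|%:R * #|A|%:R * eps.
Proof.
case: P_kernel => P_ge0 P_sum1 beta_ge0 loss_le.
set x := fun s' => r s a s' + gamma * amax a0 (Qt s') - Qo s a.
set k := beta / 2 * (Qt s a - Qo s a) ^+ 2.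
have term_le := le_card_mul_mean (s, a) _ loss_le.
rewrite card_prod natrM /= in term_le.
have term_eq : \sum_s' P s a s' * (x s' ^+ 2 + k) = \sum_s' P s a s' * x s' ^+ 2 + k.
  rewrite -[k in RHS]mul1r -(P_sum1 s a) mulr_suml -big_split.
  by apply: eq_bigr => s' _ /=; rewrite mulrDr.
have residual_eq : \sum_s' P s a s' * x s' = T Qt s a - Qo s a.
  rewrite /x /bellman /Rexp -[Qo s a in RHS]mul1r -(P_sum1 s a) mulr_suml mulr_sumr.
  by rewrite -big_split -sumrB; apply: eq_bigr => s' _ /=; rewrite mulrBr mulrDr mulrCA.
rewrite -residual_eq -/k; apply: le_trans (term_le _) => [|p].
  by rewrite /= term_eq lerD2r sqr_mean_le.
apply: sumr_ge0 => s' _; rewrite mulr_ge0 // addr_ge0 ?sqr_ge0 //.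
by rewrite mulr_ge0 ?sqr_ge0 // divr_ge0 ?ler0n.
Qed.

Lemma bellman_residual_le (Qo Qt : S -> A -> R) e d :
  (forall s a, `|T Qt s a - Qo s a| <= e) -> (forall s a, `|Qt s a - Qo s a| <= d) ->
  forall s a, `|T Qo s a - Qo s a| <= e + gamma * d.
Proof.
move=> res_le gap_le s a.
have contr : `|T Qo s a - T Qt s a| <= gamma * d.
  by apply: bellman_lipschitz => s' a'; rewrite distrC.
by rewrite -(subrKA (T Qt s a)) addrC (le_trans (ler_normD _ _)) // lerD.
Qed.

Lemma sgt2_supnorm_le (Qstar Qo Qt : S -> A -> R) (beta eps : R) :
  gamma < 1 -> 0 < beta -> (forall s a, Qstar s a = T Qstar s a) ->
  sgt2_loss a0 P r gamma beta Qo Qt <= eps ->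
  supnorm (fun s a => Qo s a - Qstar s a) <=
    Num.sqrt (eps * #|S|%:R * #|A|%:R) / (1 - gamma)
    + gamma / (1 - gamma) * Num.sqrt (2 * eps * #|S|%:R * #|A|%:R / beta).
Proof.
move=> gamma_lt1 beta_gt0 Qstar_fix loss_le.
have pointwise s a := norm_le_sqrt_of_sqr_add_le beta_gt0
  (sgt2_loss_pointwise s a (ltW beta_gt0) loss_le).
have -> : eps * #|S|%:R * #|A|%:R = #|S|%:R * #|A|%:R * eps by ring.
have -> : 2 * eps * #|S|%:R * #|A|%:R / beta = 2 * (#|S|%:R * #|A|%:R * eps) / beta by ring.
rewrite [gamma / _ * _]mulrAC -mulrDl.
apply: supnorm_sub_fixpoint_le => //; first by rewrite addr_ge0 ?mulr_ge0 ?sqrtr_ge0.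
by apply: (bellman_residual_le (Qt := Qt)) => s a; case: (pointwise s a).
Qed.

End Bellman.

Theorem theorem2 (R : realType) (S A : finType) (a0 : A)
  (P : S -> A -> S -> R) (r : S -> A -> S -> R) (gamma beta eps : R)
  (Qstar Q1 Q2 : S -> A -> R) :
  is_kernel P ->
  0 <= gamma -> gamma < 1 -> 0 < beta ->
  (forall s a, Qstar s a = bellman a0 P r gamma Qstar s a) ->
  0 < eps ->
  sgt2_loss a0 P r gamma beta Q1 Q2 <= eps ->
  sgt2_loss a0 P r gamma beta Q2 Q1 <= eps ->
  let bound := Num.sqrt (eps * #|S|%:R * #|A|%:R) / (1 - gamma)
    + gamma / (1 - gamma) * Num.sqrt (2 * eps * #|S|%:R * #|A|%:R / beta) in
  supnorm (fun s a => Q1 s a - Qstar s a) <= bound /\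
  supnorm (fun s a => Q2 s a - Qstar s a) <= bound.
Proof.
move=> P_kernel gamma_ge0 gamma_lt1 beta_gt0 Qstar_fix _ loss12_le loss21_le bound.
by split; [move: loss12_le | move: loss21_le]; apply: sgt2_supnorm_le.
Qed.
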